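(* For all integers $n,k\ge 0$ and every $x$ with $|x|<1$, \[ \sum_{d=k+1}^\infty d^n x^d = \sum_{i=0}^n \frac{e_{n,i}^k\, x^{k+i+1}}{(1-x)^{n+1}}. \]
   Context: For a fixed integer parameter $k$, the numbers $e^k_{n,i}$ are defined by $e^k_{0,0}=1$, $e^k_{n,i}=0$ whenever $i<0$ or $i>n$, and $e^k_{n,i}=(k+i+1)\,e^k_{n-1,i}+(n-k-i)\,e^k_{n-1,i-1}$ for all other integers $n,i$. *)

From HB Require Import structures.
From mathcomp Require Import all_boot all_order all_algebra.
From mathcomp Require Import all_classical all_reals all_analysis.
Set Implicit Arguments. Unset Strict Implicit. Unset Printing Implicit Defensive.
Import Order.TTheory GRing.Theory Num.Theory.
Local Open Scope ring_scope.

Fixpoint ecoef (k n : nat) : nat -> int :=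
  match n with
  | 0 => fun i => if i == 0%N then 1 else 0
  | m.+1 => fun i =>
      if (i <= m.+1)%N then
        (k + i + 1)%:Z * ecoef k m i
        + ((m.+1)%:Z - k%:Z - i%:Z) *
            (match i with 0 => 0 | j.+1 => ecoef k m j end)
      else 0
  end.

From HB Require Import structures.
From mathcomp Require Import all_boot all_order all_algebra.
From mathcomp Require Import all_classical all_reals all_analysis.
From mathcomp Require Import ring.
Import Order.TTheory GRing.Theory Num.Theory.
Import numFieldNormedType.Exports.
Local Open Scope classical_set_scope.
Local Open Scope ring_scope.

(* Put P_{n,m} = \sum_{k<d<m} d^n X^d and E_n = \sum_i e^k_{n,i} X^{k+i+1}.
   Since P_{n+1,m} = X P_{n,m}' and E_{n+1} = X(1-X) E_n' + (n+1) X E_n (the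
   recurrence of the e^k_{n,i}), applying X d/dX to an identity
   (1-X)^{n+1} P_{n,m} = E_n - X^m F_{n,m} yields the same identity at n+1,
   where F_{n,m} is a polynomial in X whose coefficients are polynomials of
   degree at most n in m.  At |x| < 1 the correction x^m F_{n,m}(x) is then a
   fixed linear combination of the sequences m^j x^m, which tend to 0. *)

Section EulerianIdentity.
Variables (R : comNzRingType) (k : nat).
Implicit Types (n m : nat) (p e f : {poly R}).

Lemma deriv_sum (I : Type) (r : seq I) (P : pred I) (F : I -> {poly R}) :
  (\sum_(i <- r | P i) F i)^`() = \sum_(i <- r | P i) (F i)^`().
Proof. exact: (big_morph _ (@derivD _) (deriv0 _)). Qed.

Definition eulerian_step n p : {poly R} :=
  'X * (1 - 'X) * p^`() + n.+1%:R * 'X * p.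

Definition partial_poly n m : {poly R} :=
  \sum_(k.+1 <= d < m) d%:R ^+ n *: 'X^d.

Definition euler_poly n : {poly R} :=
  \sum_(i < n.+1) (ecoef k n i)%:~R *: 'X^(k + i + 1).

Fixpoint rem_coef n j : {poly R} :=
  if n is n'.+1 then
    (if j is j'.+1 then (1 - 'X) * rem_coef n' j' else 0)
    + eulerian_step n' (rem_coef n' j)
  else (j == 0%N)%:R.

Definition rem_poly n m : {poly R} := \sum_(j < n.+1) m%:R ^+ j *: rem_coef n j.

Lemma rem_coef_eq0 n j : (n < j)%N -> rem_coef n j = 0.
Proof.
elim: n j => [|n IH] [|j] //= ltnj.
by rewrite !IH ?(ltnW ltnj) // /eulerian_step deriv0 !mulr0 !addr0.
Qed.

Lemma ecoef_eq0 n i : (n < i)%N -> ecoef k n i = 0.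
Proof. by case: n => [|n] /= ltni; [case: i ltni | rewrite leqNgt ltni]. Qed.

Lemma partial_polyS n m : partial_poly n.+1 m = 'X * (partial_poly n m)^`().
Proof.
rewrite /partial_poly deriv_sum mulr_sumr.
apply: eq_big_nat => -[//|d] _.
by rewrite derivZ derivXn -scalerAr mulrnAr -exprS exprSr -scalerA scaler_nat.
Qed.

Lemma euler_polyS n : euler_poly n.+1 = eulerian_step n (euler_poly n).
Proof.
pose a i : R := (ecoef k n i)%:~R.
have -> : euler_poly n.+1 =
    \sum_(i < n.+2) ((k + i + 1)%:R * a i) *: 'X^(k + i + 1)
  + \sum_(i < n.+2) ((n.+1%:R - k%:R - i%:R) * (if i : nat is j.+1 then a j else 0))
                    *: 'X^(k + i + 1).
  rewrite -big_split; apply: eq_bigr => -[i /= lei] _.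
  rewrite ltnS in lei; rewrite lei -scalerDl /a; congr (_ *: _).
  by case: i lei => [|i] _ /=; rewrite intrD !intrM ?intrB ?mulr0.
rewrite big_ord_recr /= {2}/a ecoef_eq0 // mulr0 scale0r addr0.
rewrite [X in _ + X]big_ord_recl /= mulr0 scale0r add0r -big_split.
rewrite /eulerian_step /euler_poly deriv_sum !mulr_sumr -big_split.
apply: eq_bigr => i _ /=; rewrite /bump /= add1n add0n derivZ derivXn /a.
by rewrite !addn1 addnS /= !exprS -!mul_polyC; ring.
Qed.

Lemma rem_polyS n m : rem_poly n.+1 m =
  m%:R * (1 - 'X) * rem_poly n m + eulerian_step n (rem_poly n m).
Proof.
have -> : rem_poly n.+1 m =
    \sum_(j < n.+2)
      m%:R ^+ j *: (if j : nat is j'.+1 then (1 - 'X) * rem_coef n j' else 0)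
  + \sum_(j < n.+2) m%:R ^+ j *: eulerian_step n (rem_coef n j).
  by rewrite -big_split; apply: eq_bigr => j _ /=; rewrite -scalerDr.
rewrite big_ord_recl scaler0 add0r [X in _ + X]big_ord_recr /=.
rewrite rem_coef_eq0 // /eulerian_step deriv0 !mulr0 addr0 scaler0 addr0.
rewrite /rem_poly deriv_sum !mulr_sumr -!big_split.
by apply: eq_bigr => j _ /=; rewrite derivZ /bump add1n exprS -!mul_polyC; ring.
Qed.

Lemma partial_poly0 m : (k < m)%N -> (1 - 'X) * partial_poly 0 m = 'X^(k.+1) - 'X^m.
Proof.
move=> /subnKC <-; elim: (m - k.+1)%N => [|t IH].
  by rewrite addn0 /partial_poly big_geq // mulr0 subrr.
rewrite /partial_poly addnS big_nat_recr ?leq_addr //= mulrDr.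
by rewrite [X in X + _]IH expr0 scale1r (exprS _ (k.+1 + t)); ring.
Qed.

Lemma eulerian_step_identity n m p e f :
    (1 - 'X) ^+ n.+1 * p = e - 'X^m * f ->
  (1 - 'X) ^+ n.+2 * ('X * p^`()) =
    eulerian_step n e - 'X^m * (m%:R * (1 - 'X) * f + eulerian_step n f).
Proof.
move=> eq_pef; have -> : e = (1 - 'X) ^+ n.+1 * p + 'X^m * f by rewrite eq_pef subrK.
have d1X : (1 - 'X)^`() = -1 :> {poly R} by rewrite derivB derivX -polyC1 derivC sub0r.
rewrite /eulerian_step !(derivD, derivM) deriv_exp d1X /=.
by case: m {eq_pef} => [|m]; rewrite derivXn /= ?mulr0n ?expr0 ?mul0r !exprS; ring.
Qed.

Lemma partial_poly_closed_form n m : (k < m)%N ->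
  (1 - 'X) ^+ n.+1 * partial_poly n m = euler_poly n - 'X^m * rem_poly n m.
Proof.
move=> ltkm; elim: n => [|n IH].
  rewrite expr1 partial_poly0 // /euler_poly /rem_poly !big_ord1 /=.
  by rewrite addn0 addn1 !scale1r mulr1.
by rewrite partial_polyS euler_polyS rem_polyS; apply: eulerian_step_identity.
Qed.

Lemma horner_partial_poly n m x :
  (partial_poly n m).[x] = \sum_(k.+1 <= d < m) d%:R ^+ n * x ^+ d.
Proof. by rewrite horner_sum; apply: eq_bigr => d _; rewrite hornerZ hornerXn. Qed.

Lemma horner_euler_poly n x :
  (euler_poly n).[x] = \sum_(i < n.+1) (ecoef k n i)%:~R * x ^+ (k + i + 1).
Proof. by rewrite horner_sum; apply: eq_bigr => i _; rewrite hornerZ hornerXn. Qed.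

Lemma horner_rem_poly n m x :
  (rem_poly n m).[x] = \sum_(j < n.+1) m%:R ^+ j * (rem_coef n j).[x].
Proof. by rewrite horner_sum; apply: eq_bigr => j _; rewrite hornerZ. Qed.

End EulerianIdentity.

Section PolynomialTimesGeometric.
Variable R : realType.

Lemma natr_mul_expr_double_le (y : R) (m : nat) : 0 <= y < 1 ->
  m%:R * y ^+ (m + m) <= y ^+ m / (1 - y).
Proof.
case/andP => y0 y1; have y1_gt0 : 0 < 1 - y by rewrite subr_gt0.
rewrite ler_pdivlMr //.
have -> : m%:R * y ^+ (m + m) = \sum_(i < m) y ^+ (m + m).
  by rewrite sumr_const card_ord mulr_natl.
have geo : \sum_(i < m) y ^+ (m + i) * (1 - y) = y ^+ m - y ^+ (m + m).
  under eq_bigr do rewrite exprD -mulrA.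
  rewrite -mulr_sumr -mulr_suml exprD.
  have -> : (\sum_(i < m) y ^+ i) * (1 - y) = 1 - y ^+ m.
    by rewrite mulrC -[1 - y]opprB mulNr -subrX1 opprB.
  by rewrite mulrBr mulr1.
rewrite mulr_suml (le_trans _ (_ : y ^+ m - y ^+ (m + m) <= y ^+ m)) //; last first.
  by rewrite gerDl oppr_le0 exprn_ge0.
rewrite -geo; apply: ler_sum => i _; apply: ler_wpM2r; first exact: ltW.
by apply: ler_wiXn2l => //; [exact: ltW | rewrite leq_add2l ltnW].
Qed.

Lemma cvg_natr_mul_expr (y : R) : 0 <= y < 1 ->
  (fun m => m%:R * y ^+ m) @ \oo --> 0.
Proof.
case/andP => y0 y1; set z := Num.sqrt y.
have z0 : 0 <= z := sqrtr_ge0 y.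
have z1 : z < 1 by rewrite -sqrtr1 ltr_sqrt.
apply: (@squeeze_cvgr _ _ _ _ (fun=> 0) (geometric (1 - z)^-1 z)); last 2 first.
- exact: cvg_cst.
- by apply: cvg_geometric; rewrite ger0_norm.
apply: nearW => m /=; rewrite mulr_ge0 ?exprn_ge0 //=.
have -> : y ^+ m = z ^+ (m + m) by rewrite -(sqr_sqrtr y0) -exprM mul2n addnn.
by rewrite [leRHS]mulrC natr_mul_expr_double_le ?z0.
Qed.

Lemma cvg_natrX_mul_expr (j : nat) (x : R) : `|x| < 1 ->
  (fun m => m%:R ^+ j * x ^+ m) @ \oo --> 0.
Proof.
elim: j x => [|j IH] x x1.
  by under eq_fun do rewrite expr0 mul1r; exact: cvg_expr.
set z := Num.sqrt `|x|.
have z0 : 0 <= z := sqrtr_ge0 _.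
have z1 : z < 1 by rewrite -sqrtr1 ltr_sqrt.
apply/norm_cvg0P.
have -> : (fun m => `|m%:R ^+ j.+1 * x ^+ m|)
    = (fun m => (m%:R ^+ j * z ^+ m) * (m%:R * z ^+ m)).
  apply: funext => m; rewrite normrM !normrX normr_nat.
  by rewrite -(sqr_sqrtr (normr_ge0 x)) -/z -exprM mulnC exprM exprS; ring.
rewrite -(mulr0 0); apply: cvgM; first by apply: IH; rewrite ger0_norm.
by apply: cvg_natr_mul_expr; rewrite z0.
Qed.

Lemma cvg_expr_mul_rem_poly (n : nat) (x : R) : `|x| < 1 ->
  (fun m => x ^+ m * (rem_poly R n m).[x]) @ \oo --> 0.
Proof.
move=> x1.
have -> : (fun m => x ^+ m * (rem_poly R n m).[x]) =
    (fun m => \sum_(j < n.+1) m%:R ^+ j * x ^+ m * (rem_coef R n j).[x]).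
  by apply: funext => m; rewrite horner_rem_poly mulr_sumr; apply: eq_bigr => j _; ring.
have sum0 : \sum_(j < n.+1) 0 * (rem_coef R n j).[x] = 0.
  by rewrite big1 // => j _; rewrite mul0r.
rewrite -[X in _ --> X]sum0; apply: (cvg_big add_continuous) => j _.
by apply: cvgMr_tmp; exact: cvg_natrX_mul_expr.
Qed.

End PolynomialTimesGeometric.

Theorem corollary2p2 (R : realType) (n k : nat) (x : R) (hx : `|x| < 1) :
  (fun m : nat => \sum_(k.+1 <= d < m) (d%:R) ^+ n * x ^+ d) @ \oo -->
  \sum_(i < n.+1) (ecoef k n i)%:~R * x ^+ (k + i + 1) / (1 - x) ^+ n.+1.
Proof.
have x_lt1 : x < 1 := le_lt_trans (ler_norm x) hx.
have c_neq0 : (1 - x) ^+ n.+1 != 0 by rewrite expf_neq0 // subr_eq0 gt_eqF.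
have partial_sumE m : (k < m)%N -> \sum_(k.+1 <= d < m) d%:R ^+ n * x ^+ d =
    ((euler_poly R k n).[x] - x ^+ m * (rem_poly R n m).[x]) / (1 - x) ^+ n.+1.
  move=> ltkm; have := congr1 (horner^~ x) (partial_poly_closed_form R k n m ltkm).
  by rewrite /= !hornerE horner_partial_poly => <-; rewrite mulrAC mulfV ?mul1r.
rewrite -mulr_suml -horner_euler_poly.
have closed_form_cvg : (fun m => ((euler_poly R k n).[x] - x ^+ m * (rem_poly R n m).[x])
    / (1 - x) ^+ n.+1) @ \oo --> (euler_poly R k n).[x] / (1 - x) ^+ n.+1.
  apply: cvgMr_tmp; rewrite -[X in _ --> X]subr0.
  by apply: cvgB; [exact: cvg_cst | exact: cvg_expr_mul_rem_poly].
apply: cvg_trans closed_form_cvg; apply: near_eq_cvg.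
by near=> m; rewrite partial_sumE //; near: m; exact: nbhs_infty_gt.
Unshelve. all: by end_near.
Qed.
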